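(* For every intuitionistic formula $\varphi$ in $p_1,\dots,p_n$, every model $M$ and every $x\in M^s$, \[ M^s,x\models\varphi\iff M^s,x\models s(\varphi). \]
   Context: $F_{HA}(n)$ is the free Heyting algebra on $p_1,\dots,p_n$ (intuitionistic formulas modulo IPC-equivalence) and $F_{\wedge,\to}(n)$ the free implicative meet-semilattice on $p_1,\dots,p_n$ ($(\wedge,\to)$-formulas modulo IPC-equivalence). $F_{\wedge,\to}(n)$ is finite, hence a Heyting algebra with join $\varphi\veebar\psi=\bigwedge\{\chi\in F_{\wedge,\to}(n): \varphi\le\chi,\ \psi\le\chi\}$ and bottom $p_1\wedge\cdots\wedge p_n$. $s:F_{HA}(n)\to F_{\wedge,\to}(n)$ is the unique Heyting homomorphism with $s(p_i)=p_i$; concretely $s(\varphi)$ is obtained by replacing each $\vee$ by $\veebar$ and $\bot$ by $p_1\wedge\cdots\wedge p_n$; $s(\varphi)$ is taken to be any $(\wedge,\to)$-formula representing this class. Models are posets with an order-preserving colouring $c:M\to\{0,1\}^n$ (componentwise order) and intuitionistic Kripke semantics ($x\models p_i$ iff $c(x)_i=1$). A point $x$ is separated if for some variable $q$, $x\not\models q$ but all $y>x$ satisfy $q$. $M^s$ is the set of separated points with the restricted order and colouring, regarded as a model in its own right. *)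

From Stdlib Require Import List ProofIrrelevance.
From mathcomp Require Import all_boot.
Set Implicit Arguments. Unset Strict Implicit. Unset Printing Implicit Defensive.

Inductive form (n : nat) : Type :=
| Var : 'I_n -> form n
| Top : form n
| Bot : form n
| And : form n -> form n -> form n
| Or  : form n -> form n -> form n
| Imp : form n -> form n -> form n.
Arguments Top {n}. Arguments Bot {n}.

Fixpoint is_imp n (f : form n) : bool :=
  match f with
  | Var _ | Top => true
  | Bot | Or _ _ => false
  | And a b | Imp a b => is_imp a && is_imp b
  end.

Inductive ded n : seq (form n) -> form n -> Prop :=
| d_ax   (G : seq (form n)) a : List.In a G -> ded G a
| d_topI G : ded G Top
| d_botE G a : ded G Bot -> ded G a
| d_andI G a b : ded G a -> ded G b -> ded G (And a b)
| d_andE1 G a b : ded G (And a b) -> ded G a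
| d_andE2 G a b : ded G (And a b) -> ded G b
| d_orI1 G a b : ded G a -> ded G (Or a b)
| d_orI2 G a b : ded G b -> ded G (Or a b)
| d_orE G a b c : ded G (Or a b) -> ded (a :: G) c -> ded (b :: G) c -> ded G c
| d_impI G a b : ded (a :: G) b -> ded G (Imp a b)
| d_impE G a b : ded G (Imp a b) -> ded G a -> ded G b.

(* IPC order and equivalence on formulas (the orders of F_HA(n), F_{/\,->}(n)). *)
Definition ipc_le n (a b : form n) : Prop := ded [:: a] b.
Definition ipc_eqv n (a b : form n) : Prop := ipc_le a b /\ ipc_le b a.

(* Bottom of F_{/\,->}(n): p_1 /\ ... /\ p_n (with a trailing Top, which is
   IPC-equivalent; for n = 0 it is Top, the empty meet). *)
Definition bigconj n : form n := foldr (fun i f => And (Var i) f) Top (enum 'I_n).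

(* c represents the join a \veebar b in F_{/\,->}(n):
   the meet of all (/\,->)-classes chi above a and b. *)
Definition is_vjoin n (a b c : form n) : Prop :=
  is_imp c /\
  (forall chi, is_imp chi -> ipc_le a chi -> ipc_le b chi -> ipc_le c chi) /\
  (forall d, is_imp d ->
     (forall chi, is_imp chi -> ipc_le a chi -> ipc_le b chi -> ipc_le d chi) ->
     ipc_le d c).

(* srep phi psi : psi is a (/\,->)-formula representing s(phi), where s
   replaces \/ by \veebar and Bot by p_1 /\ ... /\ p_n. *)
Inductive srep n : form n -> form n -> Prop :=
| s_var i : srep (Var i) (Var i)
| s_top : srep Top Top
| s_bot : srep Bot (bigconj n)
| s_and a b a' b' : srep a a' -> srep b b' -> srep (And a b) (And a' b')
| s_imp a b a' b' : srep a a' -> srep b b' -> srep (Imp a b) (Imp a' b')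
| s_or a b a' b' c : srep a a' -> srep b b' -> is_vjoin a' b' c -> srep (Or a b) c
| s_eqv a c c' : srep a c -> is_imp c' -> ipc_eqv c c' -> srep a c'.

Record model (n : nat) : Type := Model {
  carrier :> Type;
  mle : carrier -> carrier -> Prop;
  mle_refl : forall x, mle x x;
  mle_anti : forall x y, mle x y -> mle y x -> x = y;
  mle_trans : forall x y z, mle x y -> mle y z -> mle x z;
  col : carrier -> 'I_n -> bool;
  col_mono : forall x y i, mle x y -> col x i -> col y i
}.

Fixpoint sat n (M : model n) (x : M) (f : form n) : Prop :=
  match f with
  | Var i => col x i
  | Top => True
  | Bot => False
  | And a b => sat x a /\ sat x b
  | Or a b => sat x a \/ sat x b
  | Imp a b => forall y, mle x y -> sat y a -> sat y b
  end.

Definition separated n (M : model n) (x : M) : Prop :=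
  exists i, ~~ col x i /\ (forall y, mle x y -> y <> x -> col y i).

Definition sep_carrier n (M : model n) := {x : M | separated x}.

Section Sep.
Variables (n : nat) (M : model n).
Definition sep_le (x y : sep_carrier M) := mle (proj1_sig x) (proj1_sig y).
Lemma sep_refl x : sep_le x x. Proof. exact: mle_refl. Qed.
Lemma sep_anti x y : sep_le x y -> sep_le y x -> x = y.
Proof.
case: x y => [x px] [y py]; rewrite /sep_le /= => h1 h2.
have E := mle_anti h1 h2; subst y.
by rewrite (proof_irrelevance _ px py).
Qed.
Lemma sep_trans x y z : sep_le x y -> sep_le y z -> sep_le x z.
Proof. exact: mle_trans. Qed.
Definition sep_col (x : sep_carrier M) i := col (proj1_sig x) i.
Lemma sep_col_mono x y i : sep_le x y -> sep_col x i -> sep_col y i.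
Proof. exact: col_mono. Qed.
Definition sep_model : model n :=
  @Model n (sep_carrier M) sep_le sep_refl sep_anti sep_trans sep_col sep_col_mono.
End Sep.

(* On a model all of whose points are separated, the two readings of a
   disjunction agree.  If x is separated by q and refutes both a and b, then
   every point strictly above x forces q, so x forces (a -> q) /\ (b -> q) but
   not q; hence x refutes the (/\,->)-upper bound ((a -> q) /\ (b -> q)) -> q of
   a and b, and with it their join a \veebar b.  Likewise a separated point
   misses some variable and so refutes p_1 /\ ... /\ p_n.  Finally every point
   of M^s is separated in M^s itself, since its successors there are among its
   successors in M. *)
From mathcomp Require Import all_boot.
From Stdlib Require Import Classical.

Set Implicit Arguments.
Unset Strict Implicit.
Unset Printing Implicit Defensive.

Section Soundness.
Variables (n : nat) (M : model n).

Lemma sat_mono (a : form n) (x y : M) : mle x y -> sat x a -> sat y a.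
Proof.
elim: a x y => [i| | |a IHa b IHb|a IHa b IHb|a IHa b IHb] x y /= lexy.
- exact: col_mono.
- by [].
- by [].
- by case=> ? ?; split; [apply: IHa lexy _|apply: IHb lexy _].
- by case=> ?; [left; apply: IHa lexy _|right; apply: IHb lexy _].
- by move=> H z leyz; apply: H; apply: mle_trans lexy leyz.
Qed.

Lemma ded_sound (G : seq (form n)) a :
  ded G a -> forall x : M, (forall g, List.In g G -> sat x g) -> sat x a.
Proof.
elim=> {G a} /=.
- by move=> G a Ga x HG; apply: HG.
- by [].
- by move=> G a _ IH x /IH.
- by move=> G a b _ IHa _ IHb x HG; split; [apply: IHa|apply: IHb].
- by move=> G a b _ IH x /IH [].
- by move=> G a b _ IH x /IH [].
- by move=> G a b _ IH x /IH; left.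
- by move=> G a b _ IH x /IH; right.
- move=> G a b c _ IHab _ IHa _ IHb x HG.
  by case: (IHab x HG) => ?; [apply: IHa|apply: IHb]; move=> g [<-|/HG].
- move=> G a b _ IH x HG y lexy ya; apply: IH => g [<-|/HG] //.
  exact: sat_mono.
- by move=> G a b _ IHab _ IHa x HG; apply: (IHab x HG x (mle_refl x)); apply: IHa.
Qed.

Lemma ipc_le_sat (a b : form n) (x : M) : ipc_le a b -> sat x a -> sat x b.
Proof. by move=> /ded_sound Hab xa; apply: Hab => g [<-|]. Qed.

End Soundness.

Lemma is_imp_bigconj n : is_imp (bigconj n).
Proof. by rewrite /bigconj; elim: (enum 'I_n) => //= i l ->. Qed.

Lemma srep_is_imp n (a b : form n) : srep a b -> is_imp b.
Proof.
elim=> //= [|? ? ? ? _ -> _ ->|? ? ? ? _ -> _ ->|? ? ? ? ? _ _ _ _ []] //.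
exact: is_imp_bigconj.
Qed.

Lemma vjoin_ub n (a b c : form n) :
  is_imp a -> is_imp b -> is_vjoin a b c -> ipc_le a c /\ ipc_le b c.
Proof. by move=> Ia Ib [_ [_ least]]; split; apply: least. Qed.

Definition disj_bound n (a b c : form n) : form n :=
  Imp (And (Imp a c) (Imp b c)) c.

Lemma disj_bound_ub n (a b c : form n) :
  ipc_le a (disj_bound a b c) /\ ipc_le b (disj_bound a b c).
Proof.
split; apply: d_impI.
- apply: (@d_impE _ _ a); last by apply: d_ax => /=; auto.
  by apply: (@d_andE1 _ _ _ (Imp b c)); apply: d_ax => /=; auto.
- apply: (@d_impE _ _ b); last by apply: d_ax => /=; auto.
  by apply: (@d_andE2 _ _ (Imp a c)); apply: d_ax => /=; auto.
Qed.

Section Separated.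
Variables (n : nat) (M : model n).

Lemma separated_bigconj (x : M) : separated x -> ~ sat x (bigconj n).
Proof.
case=> q [xq _]; rewrite /bigconj.
have : q \in enum 'I_n by rewrite mem_enum.
elim: (enum 'I_n) => //= i l IH; rewrite in_cons => /orP [/eqP <-|ql] [xi xl].
- by rewrite xi in xq.
- exact: IH.
Qed.

Lemma sat_imp_var_above (x : M) q (d : form n) :
  (forall y, mle x y -> y <> x -> col y q) ->
  ~ sat x d -> sat x (Imp d (Var q)).
Proof.
move=> above xd y lexy yd /=.
by apply: above => // eyx; apply: xd; rewrite -eyx.
Qed.

Lemma separated_vjoin (x : M) (a b c : form n) :
  separated x -> is_imp a -> is_imp b -> is_vjoin a b c ->
  sat x c -> sat x a \/ sat x b.
Proof.
case=> q [xq above] Ia Ib [_ [ub _]] xc.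
apply: NNPP => /not_or_and [xa xb].
have [a_ub b_ub] := disj_bound_ub a b (Var q).
have /= xchi : sat x (disj_bound a b (Var q)).
  by apply: ipc_le_sat xc; apply: ub => //=; rewrite Ia Ib.
have := xchi x (mle_refl x)
  (conj (sat_imp_var_above above xa) (sat_imp_var_above above xb)).
by rewrite (negbTE xq).
Qed.

End Separated.

Lemma sep_model_separated n (M : model n) (x : sep_model M) : separated x.
Proof.
case: x => x sx; have [q [xq above]] := sx.
exists q; split=> // -[y sy] lexy neq.
apply: above => // eyx; apply: neq; apply: sep_anti => //.
by rewrite /sep_le /= -eyx; apply: mle_refl.
Qed.

Lemma srep_sat_separated n (N : model n) (phi psi : form n) :
  (forall x : N, separated x) -> srep phi psi ->
  forall x : N, sat x phi <-> sat x psi.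
Proof.
move=> allsep; elim=> {phi psi} //=.
- by move=> x; split=> //; apply: separated_bigconj.
- by move=> a b a' b' _ IHa _ IHb x; rewrite IHa IHb.
- move=> a b a' b' _ IHa _ IHb x.
  by split=> H y lexy; [rewrite -IHa -IHb|rewrite IHa IHb]; apply: H.
- move=> a b a' b' c sa IHa sb IHb vj x; rewrite IHa IHb.
  have [Ia Ib] := (srep_is_imp sa, srep_is_imp sb).
  have [ac bc] := vjoin_ub Ia Ib vj.
  split; last exact: separated_vjoin.
  by case=> [/(ipc_le_sat ac)|/(ipc_le_sat bc)].
- by move=> a c c' _ IH _ [cc' c'c] x; rewrite IH; split; apply: ipc_le_sat.
Qed.

Theorem theorem3p18 (n : nat) (phi psi : form n) (Hs : srep phi psi)
  (M : model n) (x : sep_model M) :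
  sat x phi <-> sat x psi.
Proof. exact: srep_sat_separated (@sep_model_separated n M) Hs x. Qed.
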